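(* Let $T\in\mathcal{GT}_k(n)$, $k\ge1$, and $i\in\{1,\dots,n\}$. Then $f_i\,\omega(T)$ is defined if and only if $i=q_j(T)$ for some $1\le j\le k$.
   Context: Type $C$ setting: $C_n=\{1<\cdots<n<\overline n<\cdots<\overline1\}$ with crystal graph $1\xrightarrow{1}2\xrightarrow{2}\cdots\xrightarrow{n-1}n\xrightarrow{n}\overline n\xrightarrow{n-1}\cdots\xrightarrow{1}\overline1$; Kashiwara operators act on $C_n^*$ by the tensor product rule. A column is a strictly increasing word; $N_z(u)$ counts letters $x\le z$ or $x\ge\overline z$; admissible columns are nonempty columns with $N_z(u)\le z$ for all $z$. $\mathrm{ACol}(C_n)$ is the set of admissible columns plus $\epsilon$; $p$ erases $\epsilon$; $f_iw$ is defined for $w\in\mathrm{ACol}(C_n)^*$ iff $f_ip(w)$ is defined. Blocks: $\mathfrak{c}(m)=12\cdots m$; $\mathfrak{c}(a,b)=(a+1)\cdots(a+b)$; $\mathfrak{c}(\overline a,c)=\overline a\cdots\overline{a-c+1}$ (empty when $b=0$ resp. $c=0$). $C$-trees: vertices $i$ ($i\ge1$), $im$, $im^-$ ($i,m\ge1$); $i$ has level $i$, $im,im^-$ level $i+m$; strand $i$ ordered $i<i1<i1^-<i2<\cdots$. A labelling of rank $k$ is $s$ from vertices of level $\le k$ to $\mathbb N$; valuation $q(v)=s(i)+\sum_{im\le v}s(im)-\sum_{im^-\le v}s(im^-)$ for $v$ on strand $i$; $n$-labelling if $0\le q\le n$. $\rho(i)=\mathfrak{c}(s(i))$; $\rho(im)=\mathfrak{c}(q(v'),s(im))$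 with $v'$ the predecessor of $im$ on its strand; $\rho(im^-)=\mathfrak{c}(\overline{q(im)},s(im^-))$. $\omega_t=\rho(t)\rho((t-1)1)\cdots\rho(1(t-1))\rho(1(t-1)^-)\cdots\rho((t-1)1^-)$, or $\epsilon$ if empty. $\mathcal{GT}_k(n)$: $n$-labellings of rank $k$ with each $\omega_t$ equal to $\epsilon$ or an admissible column; $\omega(T)=\omega_1\cdots\omega_k$. $q_j(T)=q(j(k-j)^-)$ for $1\le j\le k-1$ and $q_k(T)=s(k)$. *)

From mathcomp Require Import all_boot all_algebra.
Set Implicit Arguments. Unset Strict Implicit. Unset Printing Implicit Defensive.
Import GRing.Theory Num.Theory.

(* Unb a = a, Bar a = \overline a ; the alphabet C_n consists of the letters
   with 1 <= a <= n. *)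
Inductive letter := Unb of nat | Bar of nat.

Definition letter_val (x : letter) : nat := match x with Unb a => a | Bar a => a end.
Definition inCn (n : nat) (x : letter) : bool := (1 <= letter_val x <= n)%N.

(* position in the total order 1 < ... < n < \bar n < ... < \bar 1 *)
Definition lrank (n : nat) (x : letter) : nat :=
  match x with Unb a => a | Bar a => (2 * n).+1 - a end.
Definition lt_letter (n : nat) (x y : letter) : bool := (lrank n x < lrank n y)%N.

Definition f_letter (n i : nat) (x : letter) : option letter :=
  match x with
  | Unb a => if (i < n)%N && (a == i) then Some (Unb i.+1)
             else if (i == n) && (a == n) then Some (Bar n) else None
  | Bar a => if (i < n)%N && (a == i.+1) then Some (Bar i) else None
  end.
Definition e_letter (n i : nat) (x : letter) : option letter :=
  match x with
  | Unb a => if (i < n)%N && (a == i.+1) then Some (Unb i) else None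
  | Bar a => if (i < n)%N && (a == i) then Some (Bar i.+1)
             else if (i == n) && (a == n) then Some (Unb n) else None
  end.

(* Tensor product (signature) rule on words x_1 ... x_l = x_1 (x) ... (x) x_l:
   letters with f_i defined give '+', letters with e_i defined give '-';
   adjacent pairs '+-' are cancelled recursively, and f_i acts on the
   leftmost unmatched '+' (undefined if there is none).
   fword_aux returns (f_i w, number of unmatched '-' in w). *)
Fixpoint fword_aux (n i : nat) (w : seq letter) : option (seq letter) * nat :=
  match w with
  | [::] => (None, 0%N)
  | x :: w' =>
    let (r, m) := fword_aux n i w' in
    let r' := omap (cons x) r in
    match f_letter n i x with
    | Some y => if (0 < m)%N then (r', m.-1) else (Some (y :: w'), 0%N)
    | None => if e_letter n i x is Some _ then (r', m.+1) else (r', m)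
    end
  end.
Definition fword (n i : nat) (w : seq letter) : option (seq letter) :=
  (fword_aux n i w).1.

Definition is_column (n : nat) (u : seq letter) : bool :=
  all (inCn n) u && sorted (lt_letter n) u.
(* N_z(u): number of letters x <= z or x >= \bar z *)
Definition Nz (z : nat) (u : seq letter) : nat :=
  count (fun x => (letter_val x <= z)%N) u.
Definition admissible (n : nat) (u : seq letter) : Prop :=
  u <> [::] /\ is_column n u /\ forall z : nat, (Nz z u <= z)%N.

Definition cblock (m : nat) : seq letter := map Unb (iota 1 m).
Definition cblockP (a b : nat) : seq letter := map Unb (iota a.+1 b).
Definition cblockM (a c : nat) : seq letter :=
  map (fun j => Bar (a - j)) (iota 0 c).

(* VR i = vertex i ; VP i m = vertex im ; VM i m = vertex im^- *)
Inductive vtx := VR of nat | VP of nat & nat | VM of nat & nat.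

Definition level (v : vtx) : nat :=
  match v with VR i => i | VP i m => i + m | VM i m => i + m end.
Definition valid_vtx (v : vtx) : bool :=
  match v with VR i => (1 <= i)%N | VP i m | VM i m => (1 <= i)%N && (1 <= m)%N end.

(* A labelling is a map s : vtx -> nat; only its values on vertices of
   level <= k are relevant for a labelling of rank k (all notions below only
   read those values). *)
Definition labelling := vtx -> nat.

(* valuation q(v): strand i is ordered i < i1 < i1^- < i2 < i2^- < ... *)
Definition qv (s : labelling) (v : vtx) : int :=
  match v with
  | VR i => (s (VR i))%:Z
  | VP i m => (s (VR i))%:Z + (\sum_(1 <= l < m.+1) s (VP i l))%:Z
                - (\sum_(1 <= l < m) s (VM i l))%:Z
  | VM i m => (s (VR i))%:Z + (\sum_(1 <= l < m.+1) s (VP i l))%:Z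
                - (\sum_(1 <= l < m.+1) s (VM i l))%:Z
  end.

Definition nlabelling (n k : nat) (s : labelling) : Prop :=
  forall v, valid_vtx v -> (level v <= k)%N -> (0 <= qv s v)%R /\ (qv s v <= Posz n)%R.

(* nonnegative integers to nat (used only where q >= 0) *)
Definition nat_of_int (z : int) : nat := match z with Posz m => m | Negz _ => 0%N end.

Definition rho (s : labelling) (v : vtx) : seq letter :=
  match v with
  | VR i => cblock (s (VR i))
  | VP i m => let v' := if m == 1%N then VR i else VM i m.-1 in
              cblockP (nat_of_int (qv s v')) (s (VP i m))
  | VM i m => cblockM (nat_of_int (qv s (VP i m))) (s (VM i m))
  end.

(* omega_t = rho(t) rho((t-1)1) ... rho(1(t-1)) rho(1(t-1)^-) ... rho((t-1)1^-),
   the empty word representing epsilon *)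
Definition omega_t (s : labelling) (t : nat) : seq letter :=
  rho s (VR t)
  ++ flatten [seq rho s (VP i (t - i)) | i <- rev (iota 1 t.-1)]
  ++ flatten [seq rho s (VM i (t - i)) | i <- iota 1 t.-1].

Definition GT (n k : nat) (s : labelling) : Prop :=
  nlabelling n k s /\
  forall t, (1 <= t <= k)%N -> omega_t s t = [::] \/ admissible n (omega_t s t).

Definition omega (k : nat) (s : labelling) : seq (seq letter) :=
  [seq omega_t s t | t <- iota 1 k].

(* p : ACol(C_n)^* -> C_n^*, erasing epsilon (= empty columns) *)
Definition perase (w : seq (seq letter)) : seq letter := flatten w.

(* f_i on ACol(C_n)^* is defined iff f_i p(w) is defined *)
Definition f_defined (n i : nat) (w : seq (seq letter)) : bool :=
  isSome (fword n i (perase w)).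

Definition qj (k : nat) (s : labelling) (j : nat) : int :=
  if (j < k)%N then qv s (VM j (k - j)) else Posz (s (VR k)).

From mathcomp Require Import all_boot all_algebra.
From mathcomp Require Import zify ring.
Set Implicit Arguments. Unset Strict Implicit. Unset Printing Implicit Defensive.

(* By the tensor product rule, f_i acts on a word iff its reduced i-signature
   (the signs left after cancelling all pairs "+ -") contains a plus sign.
   Reading omega(T) = omega_1 ... omega_k column by column, strand j enters
   column t+1 with value q_j of rank t, which the column raises and lowers to
   q_j of rank t+1 (Section RankStep).  Induction on t then gives the key
   invariant signature_omega: p(omega_1 ... omega_t) has no unmatched minus
   sign and exactly #{j | q_j = i} unmatched plus signs, from which the
   corollary is immediate. *)

Section Signature.
Variables n i : nat.

Definition is_plus (x : letter) : bool := isSome (f_letter n i x).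
Definition is_minus (x : letter) : bool := isSome (e_letter n i x).

Lemma plus_not_minus x : is_plus x -> ~~ is_minus x.
Proof. by rewrite /is_plus /is_minus; case: x => a /=; repeat case: ifP => //; lia. Qed.

Fixpoint signature (w : seq letter) : nat * nat :=
  match w with
  | [::] => (0, 0)
  | x :: w' => let: (e, p) := signature w' in
     if is_plus x then (if 0 < e then (e.-1, p) else (e, p.+1))
     else if is_minus x then (e.+1, p) else (e, p)
  end.

Notation eps w := (signature w).1.
Notation phi w := (signature w).2.

Lemma fword_signature w :
  (fword_aux n i w).2 = eps w /\ isSome (fword_aux n i w).1 = (0 < phi w).
Proof.
elim: w => [|x w [IHe IHf]] //=.
rewrite /is_plus /is_minus.
case: (fword_aux n i w) (signature w) IHe IHf => r m [e p] /= -> IHf.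
case: (f_letter n i x) => [y|] /=.
  case: ifP => [|/negbT]; last by rewrite -leqNgt leqn0 => /eqP.
  by rewrite -IHf; case: r {IHf}.
by case: (e_letter n i x) => [z|] /=; rewrite -IHf; case: r {IHf}.
Qed.

(* Signatures of a concatenation: the plus signs of u meet the minus signs of v. *)
Lemma signature_cat u v :
  signature (u ++ v) =
  (eps u + (eps v - phi u), phi v + (phi u - eps v)).
Proof.
elim: u => [|x u IH] /=; first by rewrite subn0 sub0n addn0; case: (signature v).
rewrite IH; case: (signature u) => e1 p1; case: (signature v) => e2 p2 /=.
case: ifP => _; last by case: ifP => _ /=; congr pair; lia.
by case: (ltnP 0 (e1 + (e2 - p1))) => ?; case: (ltnP 0 e1) => ? /=; congr pair; lia.
Qed.

Lemma eps_cat u v : eps (u ++ v) <= eps u + eps v.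
Proof. by rewrite signature_cat /=; lia. Qed.

(* Cancellation removes as many plus as minus signs: phi - eps is the weight. *)
Lemma signature_weight w :
  phi w + count is_minus w = eps w + count is_plus w.
Proof.
elim: w => [|x w] //=; case: (signature w) => e p /= IH.
case: ifP => hp; last by case: ifP => hm /=; rewrite ?hp ?hm /=; lia.
by rewrite (negbTE (plus_not_minus hp)); case: (ltnP 0 e) => /= ?; lia.
Qed.

Lemma eps_flatten (f : nat -> seq letter) (P : pred nat) J :
  (forall j, j \in J -> eps (f j) <= P j) ->
  eps (flatten (map f J)) <= count P J.
Proof.
elim: J => [|j J IH] H //=.
apply: leq_trans (eps_cat _ _) (leq_add (H _ (mem_head _ _)) (IH _)).
by move=> x hx; apply: H; rewrite in_cons hx orbT.
Qed.

Lemma weight_flatten (f : nat -> seq letter) (P Q : pred nat) J :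
  (forall j, j \in J -> count is_plus (f j) + P j = count is_minus (f j) + Q j) ->
  count is_plus (flatten (map f J)) + count P J
  = count is_minus (flatten (map f J)) + count Q J.
Proof.
elim: J => [|j J IH] H //=.
rewrite !count_cat [LHS]addnACA [RHS]addnACA H ?mem_head // IH //.
by move=> x hx; apply: H; rewrite in_cons hx orbT.
Qed.

End Signature.

Section Blocks.
Variables n i : nat.
Hypothesis i_range : 1 <= i <= n.

Notation eps w := (signature n i w).1.
Notation phi w := (signature n i w).2.
Notation pluses w := (count (is_plus n i) w).
Notation minuses w := (count (is_minus n i) w).

Lemma cblockM_S b c : cblockM b c.+1 = Bar b :: cblockM b.-1 c.
Proof.
rewrite /cblockM /= subn0; congr cons.
rewrite -[1]/(1 + 0) iotaDl -map_comp; apply: eq_map => j /=; congr Bar; lia.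
Qed.

(* In the increasing block (a+1)...(a+p), every minus sign (a letter i+1) is
   cancelled by a preceding i, except when the block starts with i+1. *)
Lemma eps_cblockP a p : eps (cblockP a p) <= (a == i).
Proof.
case/andP: i_range => i_gt0 i_le_n; elim: p a => [|p IH] a //=.
move: (IH a.+1); rewrite /cblockP /=.
case: (signature n i _) => e q /=; rewrite /is_plus /is_minus /=.
by repeat case: ifP => /=; lia.
Qed.

(* Same for the decreasing barred block \bar b ... \bar(b-c+1). *)
Lemma eps_cblockM b c : b <= n -> eps (cblockM b c) <= (b == i).
Proof.
case/andP: i_range => i_gt0 i_le_n; elim: c b => [|c IH] b b_le_n //.
rewrite cblockM_S /=; move: (IH b.-1 (leq_trans (leq_pred b) b_le_n)).
case: (signature n i _) => e q /=; rewrite /is_plus /is_minus /=.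
by repeat case: ifP => /=; lia.
Qed.

(* Weight of a block: it moves the value a to a + p (resp. b to b - c). *)
Lemma weight_cblockP a p : a + p <= n ->
  pluses (cblockP a p) + (a == i) = minuses (cblockP a p) + (a + p == i).
Proof.
case/andP: i_range => i_gt0 i_le_n; elim: p a => [|p IH] a /=; first by rewrite addn0.
move=> le_n; move: (IH a.+1 ltac:(lia)); rewrite /cblockP /= /is_plus /is_minus /=.
by repeat case: ifP => /=; lia.
Qed.

Lemma weight_cblockM b c : c <= b <= n ->
  pluses (cblockM b c) + (b == i) = minuses (cblockM b c) + (b - c == i).
Proof.
case/andP: i_range => i_gt0 i_le_n; elim: c b => [|c IH] b; first by rewrite subn0.
move=> le_n; rewrite cblockM_S /=; move: (IH b.-1 ltac:(lia)).
rewrite /is_plus /is_minus /=.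
by repeat case: ifP => /=; lia.
Qed.

Lemma column_signature st (a p m : nat -> nat) (J : seq nat) :
  st <= n -> (forall j, j \in J -> a j + p j <= n /\ m j <= a j + p j) ->
  let w := cblock st ++ flatten [seq cblockP (a j) (p j) | j <- rev J]
             ++ flatten [seq cblockM (a j + p j) (m j) | j <- J] in
  eps w <= count (fun j => a j == i) J /\
  phi w + count (fun j => a j == i) J
    = eps w + (st == i) + count (fun j => a j + p j - m j == i) J.
Proof.
move=> st_le_n hJ w; rewrite {}/w catA; change (cblock st) with (cblockP 0 st).
have i_neq0 : (0 == i) = false by case/andP: i_range; case: i.
set U := flatten [seq cblockP _ _ | j <- rev J].
set B := flatten [seq cblockM _ _ | j <- J].
set u := cblockP 0 st ++ U.
have eps_u : eps u <= count (fun j => a j == i) J.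
  have eps_U : eps U <= count (fun j => a j == i) (rev J).
    by apply: eps_flatten => j _; apply: eps_cblockP.
  rewrite count_rev in eps_U; have := eps_cblockP 0 st; rewrite i_neq0 /u.
  by have := eps_cat n i (cblockP 0 st) U; lia.
have eps_B : eps B <= count (fun j => a j + p j == i) J.
  by apply: eps_flatten => j hj; apply: eps_cblockM; case: (hJ j hj).
have weight_u : pluses u + count (fun j => a j == i) J
   = minuses u + (st == i) + count (fun j => a j + p j == i) J.
  have weight_U : pluses U + count (fun j => a j == i) (rev J)
      = minuses U + count (fun j => a j + p j == i) (rev J).
    apply: weight_flatten => j; rewrite mem_rev => hj.
    by apply: weight_cblockP; case: (hJ j hj).
  have := @weight_cblockP 0 st st_le_n; rewrite i_neq0 add0n.
  by move: weight_U; rewrite !count_rev /u !count_cat; lia.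
have weight_B : pluses B + count (fun j => a j + p j == i) J
   = minuses B + count (fun j => a j + p j - m j == i) J.
  by apply: weight_flatten => j hj; apply: weight_cblockM; case: (hJ j hj) => ? ?; lia.
clearbody u B.
have := signature_weight n i u; have := signature_weight n i (u ++ B).
by rewrite !count_cat !signature_cat /=; split; lia.
Qed.

End Blocks.

Import GRing.Theory Num.Theory.

Lemma qv_VP (s : labelling) j m : 0 < m ->
  qv s (VP j m) = (qv s (if m == 1 then VR j else VM j m.-1) + (s (VP j m))%:Z)%R.
Proof.
case: m => [|[|m]] // _; rewrite /qv; first by rewrite /= big_nat1 big_geq // subr0.
by rewrite /= big_nat_recr //= PoszD; ring.
Qed.

Lemma qv_VM (s : labelling) j m : 0 < m ->
  qv s (VM j m) = (qv s (VP j m) - (s (VM j m))%:Z)%R.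
Proof.
case: m => [|m] // _; rewrite /qv.
by rewrite /= (@big_nat_recr _ _ _ m.+1 1 (fun l => s (VM j l))) //= PoszD; ring.
Qed.

Lemma qv_pred_qj (s : labelling) t j : 1 <= j <= t ->
  qv s (if t.+1 - j == 1 then VR j else VM j (t.+1 - j).-1) = qj t s j.
Proof.
case/andP=> j_gt0 j_le_t; rewrite /qj; case: ltnP => [j_lt_t|t_le_j].
  have -> : (t.+1 - j == 1) = false by apply/eqP; lia.
  by have -> : (t.+1 - j).-1 = t - j by lia.
have -> : j = t by lia.
by rewrite subSnn.
Qed.

Lemma nat_of_intK (z : int) : (0 <= z)%R -> Posz (nat_of_int z) = z.
Proof. by case: z. Qed.

Lemma nlabelling_value n k (s : labelling) v :
  nlabelling n k s -> valid_vtx v -> level v <= k ->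
  qv s v = Posz (nat_of_int (qv s v)) /\ nat_of_int (qv s v) <= n.
Proof.
move=> NL v_valid v_level; have [q_ge0 q_le_n] := NL v v_valid v_level.
by rewrite nat_of_intK //; split => //; rewrite -lez_nat nat_of_intK.
Qed.

Lemma iota1_succ t : iota 1 t.+1 = rcons (iota 1 t) t.+1.
Proof. by have := iotaD 1 t 1; rewrite addn1 add1n cats1. Qed.

Definition start_value (s : labelling) t j : nat := nat_of_int (qj t s j).
Definition raise (s : labelling) t j : nat := s (VP j (t.+1 - j)).
Definition lower (s : labelling) t j : nat := s (VM j (t.+1 - j)).

Section RankStep.
Variables (n k t : nat) (s : labelling).
Hypothesis NL : nlabelling n k s.
Hypothesis t_lt_k : t < k.

Local Notation a := (start_value s t).
Local Notation p := (raise s t).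
Local Notation m := (lower s t).

Lemma start_valueE j : j \in iota 1 t -> qj t s j = Posz (a j).
Proof.
rewrite mem_iota /start_value /qj => j_range; case: ltnP => j_lt_t.
  by have [] := @nlabelling_value n k s (VM j (t - j)) NL
                  ltac:(rewrite /=; lia) ltac:(rewrite /=; lia).
by have [] := @nlabelling_value n k s (VR t) NL ltac:(rewrite /=; lia) ltac:(rewrite /=; lia).
Qed.

Lemma raisedE j : j \in iota 1 t ->
  qv s (VP j (t.+1 - j)) = Posz (a j + p j) /\ a j + p j <= n.
Proof.
move=> j_in; have := start_valueE j_in; move: j_in; rewrite mem_iota => j_range a_j.
have q_VP : qv s (VP j (t.+1 - j)) = Posz (a j + p j).
  by rewrite qv_VP ?qv_pred_qj ?a_j ?PoszD //; lia.
have [_] := @nlabelling_value n k s (VP j (t.+1 - j)) NL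
               ltac:(rewrite /=; lia) ltac:(rewrite /=; lia).
by rewrite q_VP.
Qed.

Lemma loweredE j : j \in iota 1 t ->
  qj t.+1 s j = Posz (a j + p j - m j) /\ m j <= a j + p j.
Proof.
move=> j_in; have [q_VP _] := raisedE j_in; move: j_in; rewrite mem_iota => j_range.
have q_VM : qj t.+1 s j = (Posz (a j + p j) - Posz (m j))%R.
  by rewrite /qj ifT; [rewrite qv_VM ?q_VP //; lia | lia].
have q_ge0 : (0 <= qj t.+1 s j)%R.
  have [/NL vertex_ok level_ok] :
    valid_vtx (VM j (t.+1 - j)) /\ level (VM j (t.+1 - j)) <= k by rewrite /=; lia.
  by rewrite /qj ifT //; [case: (vertex_ok level_ok) | lia].
have m_le : m j <= a j + p j by rewrite -lez_nat -subr_ge0 -q_VM.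
by split=> //; rewrite q_VM -subzn.
Qed.

Lemma top_le_n : s (VR t.+1) <= n.
Proof.
by have [] := @nlabelling_value n k s (VR t.+1) NL ltac:(rewrite /=; lia) ltac:(rewrite /=; lia).
Qed.

Lemma omega_succE : omega_t s t.+1 =
  cblock (s (VR t.+1)) ++ flatten [seq cblockP (a j) (p j) | j <- rev (iota 1 t)]
  ++ flatten [seq cblockM (a j + p j) (m j) | j <- iota 1 t].
Proof.
rewrite /omega_t; congr (_ ++ (flatten _ ++ flatten _)); apply/eq_in_map => j.
  rewrite mem_rev => j_in; have a_j := start_valueE j_in.
  by move: j_in; rewrite mem_iota => j_range; rewrite /= qv_pred_qj ?a_j //; lia.
by move=> j_in; have [q_VP _] := raisedE j_in; rewrite /rho q_VP.
Qed.

Lemma column_step i : 1 <= i <= n ->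
  let w := omega_t s t.+1 in
  (signature n i w).1 <= count (fun j => qj t s j == Posz i) (iota 1 t) /\
  (signature n i w).2 + count (fun j => qj t s j == Posz i) (iota 1 t)
    = (signature n i w).1 + count (fun j => qj t.+1 s j == Posz i) (iota 1 t.+1).
Proof.
move=> i_range w; rewrite {}/w omega_succE.
have [] := column_signature i_range top_le_n
  (fun j j_in => conj (proj2 (raisedE j_in)) (proj2 (loweredE j_in))).
have -> : count (fun j => qj t s j == Posz i) (iota 1 t) = count (fun j => a j == i) (iota 1 t).
  by apply: eq_in_count => j j_in; rewrite start_valueE.
have -> : count (fun j => qj t.+1 s j == Posz i) (iota 1 t.+1)
        = count (fun j => a j + p j - m j == i) (iota 1 t) + (s (VR t.+1) == i).
  have qj_top : qj t.+1 s t.+1 = Posz (s (VR t.+1)) by rewrite /qj ltnn.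
  rewrite iota1_succ -cats1 count_cat /= qj_top addn0; congr (_ + _).
  by apply: eq_in_count => j j_in; rewrite (proj1 (loweredE j_in)).
by split=> //; lia.
Qed.

End RankStep.

Lemma signature_omega n k (s : labelling) i t :
  nlabelling n k s -> 1 <= i <= n -> t <= k ->
  signature n i (perase (omega t s))
  = (0, count (fun j => qj t s j == Posz i) (iota 1 t)).
Proof.
move=> NL i_range; elim: t => [|t IH] t_lt_k //.
have [eps_col phi_col] := column_step NL t_lt_k i_range.
have -> : perase (omega t.+1 s) = perase (omega t s) ++ omega_t s t.+1.
  by rewrite /perase /omega iota1_succ map_rcons -cats1 flatten_cat /= cats0.
set rank_succ := count _ (iota 1 t.+1) in phi_col *.
by rewrite signature_cat (IH (ltnW t_lt_k)) /=; congr pair; lia.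
Qed.

Theorem corollary5p6 (n k : nat) (s : labelling) (i : nat) :
  (1 <= k)%N -> GT n k s -> (1 <= i <= n)%N ->
  (f_defined n i (omega k s) <->
   exists2 j : nat, (1 <= j <= k)%N & Posz i = qj k s j).
Proof.
move=> _ [NL _] i_range.
have [_ f_iff_phi] := fword_signature n i (perase (omega k s)).
rewrite /f_defined /fword f_iff_phi (signature_omega NL i_range (leqnn k)) /= -has_count.
split=> [/hasP [j] | [j j_range q_j]].
  by rewrite mem_iota => j_range /eqP q_j; exists j; [lia | rewrite q_j].
by apply/hasP; exists j; rewrite ?mem_iota ?q_j //; lia.
Qed.
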